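(* Let $H$ be a digraph and $\delta>0$. If $2a_S\ge|S|$ for all $S\in\mathcal S_H$, then $G(H,\delta)$ is obtained when $y_1=1$. Similarly, if $2b_S\ge|S|$ for all $S\in\mathcal S_H$, then $G(H,\delta)$ is obtained when $y_2=1$.
   Context: A digraph has no self-loops and at most one directed edge per ordered pair; degree = in-degree + out-degree; $\Delta$ is the maximum degree of $H$. $H^*$ is the induced subgraph on vertices of degree $\Delta$; $\mathcal S_H$ is the collection of independent sets of $H^*$ (including $\emptyset$). For $S\in\mathcal S_H$ let $T=\mathsf N(S)$ be the vertices outside $S$ adjacent in either direction to $S$, $\mathsf E(S,T)$ and $\mathsf E(T,S)$ the sets of edges from $S$ to $T$ and from $T$ to $S$, and $F_S$ the bipartite digraph on $S\cup T$ with edges $\mathsf E(S,T)\cup\mathsf E(T,S)$. A maximum fractional matching of $F_S$ is $w:\mathsf E(F_S)\to[0,1]$ with $\sum_{e\ni v}w(e)\le1$ for all vertices and equality for $v\in S$; $a_S=\max_w\sum_{e\in\mathsf E(S,T)}w(e)$, $b_S=\max_w\sum_{e\in\mathsf E(T,S)}w(e)$ over such $w$. $\mathsf v^+(S),\mathsf v^-(S),\mathsf v^{\pm}(S)$ count vertices of $S$ with no in-neighbours, no out-neighbours, and both, in $H$. \[ g_H(x_1,x_2,y_1,y_2)=\sum_{S\in\mathcal S_H}x_1^{\mathsf v^+(S)}x_2^{\mathsf v^-(S)}(x_1\wedge x_2)^{\mathsf v^{\pm}(S)}y_1^{a_S}y_2^{b_S}, \] \[ G(H,\delta)=\inf_{x_1,x_2\ge0,\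 0\le y_1,y_2\le1}\{x_1y_1+x_2y_2:g_H(x_1,x_2,y_1,y_2)=1+\delta\}. \] ''Obtained when $y_1=1$'' means restricting the infimum to $y_1=1$ does not change its value (similarly for $y_2$). *)

From HB Require Import structures.
From mathcomp Require Import all_boot all_order all_algebra.
From mathcomp Require Import classical_sets boolp reals exp.
Set Implicit Arguments. Unset Strict Implicit. Unset Printing Implicit Defensive.
Import Order.TTheory GRing.Theory Num.Theory.
Local Open Scope ring_scope.
Local Open Scope classical_set_scope.

(* A digraph on a finite vertex type V is an edge relation E : rel V
   (E u v means there is an edge u -> v); no self-loops is the hypothesis
   irreflexive E, at most one edge per ordered pair is automatic. *)

Section Digraph.
Variables (V : finType) (E : rel V).

Definition deg (v : V) : nat := #|[set u | E v u]| + #|[set u | E u v]|.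

Definition Delta : nat := \max_(v : V) deg v.

(* S is an independent set of H^* (induced subgraph on vertices of degree Delta) *)
Definition indepHstar (S : {set V}) : bool :=
  (S \subset [set v | deg v == Delta]) &&
  [forall u in S, forall v in S, ~~ E u v].

Definition nbh (S : {set V}) : {set V} :=
  [set v | (v \notin S) && [exists u in S, E u v || E v u]].

Definition FE (S : {set V}) (u v : V) : bool :=
  E u v && (((u \in S) && (v \in nbh S)) || ((u \in nbh S) && (v \in S))).

Section Real.
Variable R : realType.

Definition wsum (S : {set V}) (w : V -> V -> R) (v : V) : R :=
  \sum_(u | FE S v u) w v u + \sum_(u | FE S u v) w u v.

Definition maxfracmatch (S : {set V}) (w : V -> V -> R) : Prop :=
  [/\ forall u v, FE S u v -> 0 <= w u v <= 1,
      forall v, wsum S w v <= 1 &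
      forall v, v \in S -> wsum S w v = 1].

Definition wST (S : {set V}) (w : V -> V -> R) : R :=
  \sum_(u in S) \sum_(v in nbh S | E u v) w u v.
Definition wTS (S : {set V}) (w : V -> V -> R) : R :=
  \sum_(u in nbh S) \sum_(v in S | E u v) w u v.

Definition a_S (S : {set V}) : R :=
  sup [set wST S w | w in [set w | maxfracmatch S w]].
Definition b_S (S : {set V}) : R :=
  sup [set wTS S w | w in [set w | maxfracmatch S w]].

Definition vplus (S : {set V}) : nat := #|[set v in S | [forall u, ~~ E u v]]|.
Definition vminus (S : {set V}) : nat := #|[set v in S | [forall u, ~~ E v u]]|.
Definition vpm (S : {set V}) : nat :=
  #|[set v in S | [exists u, E u v] && [exists u, E v u]]|.

Definition gH (x1 x2 y1 y2 : R) : R :=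
  \sum_(S : {set V} | indepHstar S)
     x1 ^+ vplus S * x2 ^+ vminus S * (Num.min x1 x2) ^+ vpm S
     * y1 `^ a_S S * y2 `^ b_S S.

Definition GH (delta : R) : R :=
  inf [set t | exists x1 x2 y1 y2 : R,
        [/\ 0 <= x1, 0 <= x2, 0 <= y1 <= 1, 0 <= y2 <= 1 &
            gH x1 x2 y1 y2 = 1 + delta] /\ t = x1 * y1 + x2 * y2].

Definition GH_y1 (delta : R) : R :=
  inf [set t | exists x1 x2 y2 : R,
        [/\ 0 <= x1, 0 <= x2, 0 <= y2 <= 1,
            gH x1 x2 1 y2 = 1 + delta & t = x1 * 1 + x2 * y2]].

Definition GH_y2 (delta : R) : R :=
  inf [set t | exists x1 x2 y1 : R,
        [/\ 0 <= x1, 0 <= x2, 0 <= y1 <= 1,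
            gH x1 x2 y1 1 = 1 + delta & t = x1 * y1 + x2 * 1]].

End Real.
End Digraph.

(* Each term of g_H is a monomial x1^p x2^m (x1 /\ x2)^q y1^a y2^b with
   n := p + m + q = |S|, and a maximum fractional matching of F_S gives
   v^+ <= a_S <= |S| - v^-, v^- <= b_S <= |S| - v^+ and |S| <= a_S + b_S.
   Together with |S| <= 2 a_S these make p <= a, n <= a + b, n <= 2 a and
   m <= p + q hold for every term.
   Take a feasible point and let c be the larger of y1, y2 (c = 0 is
   impossible because g_H(x1, x2, 0, 0) <= g_H(0, 0, 1, 0) = 1).  Replacing
   (x, y) by (c x, y / c) keeps the objective and, as n <= a + b, does not
   decrease g_H.  If c = y1 we now have y1 = 1.  Otherwise y2 = 1 and
   y1 = s <= 1; moving to (x1 s, x2, 1, 1) when x2 <= x1 s, and to (M, M, 1, 1)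
   with M = (x1 s + x2) / 2 otherwise, keeps the objective and does not
   decrease g_H by the exponent inequalities.  Finally
   g_H(0, 0, 1, y) = 1 < 1 + delta, so scaling x1, x2 down by a common factor
   in [0, 1] (intermediate value theorem for the polynomial
   t |-> g_H(t x1, t x2, 1, y)) makes the constraint tight again without
   increasing the objective.  The statement for y2 is the one for y1 with the
   roles of (x1, y1) and (x2, y2) exchanged. *)

From HB Require Import structures.
From mathcomp Require Import all_boot all_order all_algebra.
From mathcomp Require Import classical_sets boolp reals exp.
From mathcomp Require Import ring lra zify.
From mathcomp Require polyrcf.
Set Implicit Arguments.
Unset Strict Implicit.
Unset Printing Implicit Defensive.
Import Order.TTheory GRing.Theory Num.Theory.
Local Open Scope classical_set_scope.
Local Open Scope ring_scope.

Section Monomial.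
Variable R : realType.
Implicit Types (a b c s X Y M : R) (p m q : nat).

Lemma ger_powR_ge0 s (e1 e2 : R) : 0 <= s <= 1 -> 0 <= e1 <= e2 -> s `^ e2 <= s `^ e1.
Proof.
case/andP=> s_ge0 s_le1 /andP[e1_ge0 le_e12].
have [->|s_neq0] := eqVneq s 0; last first.
  by apply: ger_powR => //; rewrite lt_neqAle eq_sym s_neq0 s_ge0.
rewrite /powR eqxx; have [_|e1_neq0] := eqVneq e1 0; first by case: (e2 == 0).
by rewrite gt_eqF // (lt_le_trans _ le_e12) // lt_neqAle eq_sym e1_neq0.
Qed.

Lemma le_powR_expr s p a : 0 <= s <= 1 -> p%:R <= a -> s `^ a <= s ^+ p.
Proof.
move=> s01 le_pa; have /andP[s_ge0 _] := s01.
by rewrite -powR_mulrn // ger_powR_ge0 // ler0n.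
Qed.

Lemma powR_le_sqrt_expr s (n : nat) a : 0 <= s <= 1 -> n%:R <= 2 * a ->
  s `^ a <= Num.sqrt s ^+ n.
Proof.
move=> s01 le_n2a; have /andP[s_ge0 _] := s01.
rewrite -powR12_sqrt // -powR_mulrn ?powR_ge0 // -powRrM ger_powR_ge0 //.
by rewrite mulr_ge0 ?invr_ge0 ?ler0n //= ler_pdivrMl //; lra.
Qed.

Definition monomial p m q a b (x1 x2 y1 y2 : R) : R :=
  x1 ^+ p * x2 ^+ m * Num.min x1 x2 ^+ q * y1 `^ a * y2 `^ b.

Lemma monomial_ge0 p m q a b (x1 x2 y1 y2 : R) : 0 <= x1 -> 0 <= x2 ->
  0 <= monomial p m q a b x1 x2 y1 y2.
Proof.
move=> x1_ge0 x2_ge0; have : 0 <= Num.min x1 x2 by rewrite le_min x1_ge0.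
by move=> min_ge0; rewrite !mulr_ge0 ?exprn_ge0 ?powR_ge0.
Qed.

Lemma monomial_swap p m q a b (x1 x2 y1 y2 : R) :
  monomial p m q a b x1 x2 y1 y2 = monomial m p q b a x2 x1 y2 y1.
Proof. by rewrite /monomial minC; ring. Qed.

Lemma monomialZx p m q a b c (x1 x2 y1 y2 : R) : 0 <= c ->
  monomial p m q a b (c * x1) (c * x2) y1 y2 =
  c ^+ (p + m + q) * monomial p m q a b x1 x2 y1 y2.
Proof. by move=> c_ge0; rewrite /monomial -minr_pMr // !exprMn !exprD; ring. Qed.

Lemma monomialZy p m q a b c (x1 x2 y1 y2 : R) : 0 < c -> 0 <= y1 -> 0 <= y2 ->
  monomial p m q a b x1 x2 (c * y1) (c * y2) =
  c `^ (a + b) * monomial p m q a b x1 x2 y1 y2.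
Proof.
move=> c_gt0 y1_ge0 y2_ge0.
rewrite /monomial !powRM ?(ltW c_gt0) // powRD ?(gt_eqF c_gt0) ?implybT //; ring.
Qed.

Lemma monomial_shiftZ p m q a b c (x1 x2 y1 y2 : R) :
  0 <= x1 -> 0 <= x2 -> 0 < c <= 1 -> 0 <= y1 -> 0 <= y2 ->
  (p + m + q)%:R <= a + b ->
  monomial p m q a b x1 x2 (c * y1) (c * y2) <=
  monomial p m q a b (c * x1) (c * x2) y1 y2.
Proof.
move=> x1_ge0 x2_ge0 /andP[c_gt0 c_le1] y1_ge0 y2_ge0 le_nab.
rewrite monomialZy // monomialZx ?(ltW c_gt0) //.
apply: ler_wpM2r; first exact: monomial_ge0.
by rewrite le_powR_expr // ltW.
Qed.

Lemma monomial_y0 p m q a b (x1 x2 : R) : 0 <= x1 -> 0 <= x2 ->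
  (p + m + q)%:R <= 2 * a ->
  monomial p m q a b x1 x2 0 0 <= monomial p m q a b 0 0 1 0.
Proof.
move=> x1_ge0 x2_ge0 le_n2a.
have [a_gt0|a_le0] := ltP 0 a.
  by rewrite {1}/monomial powR0 ?gt_eqF // mulr0 mul0r monomial_ge0.
have n0 : (p + m + q = 0)%N.
  by apply/eqP; rewrite -(eqr_nat R) eq_le ler0n andbT; lra.
have [-> -> ->] : [/\ p = 0, m = 0 & q = 0]%N by split; lia.
rewrite /monomial !expr0 !mul1r powR1; apply: ler_wpM2r; first exact: powR_ge0.
by rewrite /powR eqxx; case: (a == 0).
Qed.

Lemma monomial_y1 p m q a b (u1 u2 : R) s : 0 <= u1 -> 0 <= u2 -> 0 <= s <= 1 ->
  u2 <= u1 * s -> p%:R <= a ->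
  monomial p m q a b u1 u2 s 1 <= monomial p m q a b (u1 * s) u2 1 1.
Proof.
move=> u1_ge0 u2_ge0 s01 le_u2 le_pa; have /andP[s_ge0 s_le1] := s01.
have le_u21 : u2 <= u1 by rewrite (le_trans le_u2) // ler_piMr.
rewrite /monomial powR1 !mulr1 (min_idPr le_u21) (min_idPr le_u2) exprMn.
rewrite [X in _ <= X](_ : _ = u1 ^+ p * u2 ^+ m * u2 ^+ q * s ^+ p); last by ring.
by apply: ler_wpM2l; rewrite ?le_powR_expr ?mulr_ge0 ?exprn_ge0.
Qed.

Lemma expr_le_of_mul X Y M i j : 0 <= X -> 0 <= Y -> X <= M -> X * Y <= M ^+ 2 ->
  (j <= i)%N -> X ^+ i * Y ^+ j <= M ^+ (i + j).
Proof.
move=> X_ge0 Y_ge0 le_XM le_XYM le_ji.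
have M_ge0 : 0 <= M := le_trans X_ge0 le_XM.
have -> : X ^+ i * Y ^+ j = X ^+ (i - j) * (X * Y) ^+ j.
  by rewrite exprMn mulrA -exprD subnK.
have -> : (i + j = (i - j) + 2 * j)%N by lia.
rewrite exprD exprM; apply: ler_pM; rewrite ?exprn_ge0 ?mulr_ge0 //.
  by apply: lerXn2r; rewrite ?nnegrE.
by apply: lerXn2r; rewrite ?nnegrE ?mulr_ge0 ?exprn_ge0.
Qed.

(* With [M = (u1 s + u2) / 2], bound [s `^ a] by [s ^+ p] or by [sqrt s ^+ n];
   the remaining factors then pair up into [u1 s <= M], [u1 s u2 <= M ^ 2]
   (AM-GM) and [x sqrt s <= x (1 + s) / 2 <= M]. *)
Lemma monomial_balance p m q a b (u1 u2 : R) s : 0 <= u1 -> 0 <= u2 ->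
  0 <= s <= 1 -> u1 * s <= u2 -> p%:R <= a -> (p + m + q)%:R <= 2 * a ->
  (m <= p + q)%N ->
  monomial p m q a b u1 u2 s 1 <=
  monomial p m q a b ((u1 * s + u2) / 2) ((u1 * s + u2) / 2) 1 1.
Proof.
move=> u1_ge0 u2_ge0 s01 le_u1s le_pa le_n2a le_mpq; have /andP[s_ge0 s_le1] := s01.
set M := (u1 * s + u2) / 2; set r := Num.sqrt s.
have r_ge0 : 0 <= r := sqrtr_ge0 s.
have rr : r * r = s by rewrite -expr2 sqr_sqrtr.
have le_2r : 2 * r <= 1 + s.
  by rewrite -subr_ge0 -rr (_ : _ - _ = (1 - r) ^+ 2) ?sqr_ge0 //; ring.
have le_u1sM : u1 * s <= M by rewrite /M; lra.
have le_AGM : u1 * s * u2 <= M ^+ 2.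
  by rewrite -subr_ge0 (_ : _ - _ = ((u1 * s - u2) / 2) ^+ 2) ?sqr_ge0 // /M; field.
have le_rr : u1 * r * (u2 * r) <= M ^+ 2 by rewrite mulrACA rr mulrAC.
have le_sa_r : s `^ a <= r ^+ (p + m + q) := powR_le_sqrt_expr s01 le_n2a.
rewrite /monomial !powR1 !mulr1 minxx -!exprD.
set K := _ * _ * _ ^+ q.
have K_ge0 : 0 <= K by rewrite !mulr_ge0 ?exprn_ge0 ?le_min ?u1_ge0.
have [le_u12|lt_u21] := leP u1 u2.
  apply: (le_trans (ler_wpM2l K_ge0 le_sa_r)).
  rewrite /K (min_idPl le_u12) addnAC.
  rewrite [X in X <= _](_ : _ = (u1 * r) ^+ (p + q) * (u2 * r) ^+ m).
    apply: expr_le_of_mul; rewrite ?mulr_ge0 //.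
    by have := ler_wpM2l u1_ge0 le_2r; rewrite /M; lra.
  by rewrite !exprMn !exprD; ring.
have [le_mqp|lt_pmq] := leqP (m + q) p.
  apply: (le_trans (ler_wpM2l K_ge0 (le_powR_expr s01 le_pa))).
  rewrite /K (min_idPr (ltW lt_u21)) -addnA.
  rewrite [X in X <= _](_ : _ = (u1 * s) ^+ p * u2 ^+ (m + q)).
    by apply: expr_le_of_mul; rewrite ?mulr_ge0.
  by rewrite !exprMn !exprD; ring.
apply: (le_trans (ler_wpM2l K_ge0 le_sa_r)).
rewrite /K (min_idPr (ltW lt_u21)) -addnA addnC.
rewrite [X in X <= _](_ : _ = (u2 * r) ^+ (m + q) * (u1 * r) ^+ p).
  apply: expr_le_of_mul; rewrite ?mulr_ge0 ?(ltnW lt_pmq) 1?mulrC //.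
  have := ler_wpM2l u2_ge0 le_2r; have := ler_wpM2r s_ge0 (ltW lt_u21).
  by rewrite /M; lra.
by rewrite !exprMn !exprD; ring.
Qed.

Definition admissible p m q a b : Prop :=
  [/\ p%:R <= a, (p + m + q)%:R <= a + b, (p + m + q)%:R <= 2 * a & (m <= p + q)%N].

Lemma admissible_of_bounds p m q a b : p%:R <= a -> a + m%:R <= (p + m + q)%:R ->
  (p + m + q)%:R <= a + b -> (p + m + q)%:R <= 2 * a -> admissible p m q a b.
Proof.
move=> le_pa le_am le_nab le_n2a; split=> //.
by rewrite -(ler_nat R) natrD; move: le_am le_n2a; rewrite !natrD; lra.
Qed.

End Monomial.

Arguments monomial {R}.
Arguments admissible {R}.

Section Infimum.
Variable R : realType.

Lemma inf_eq_dominated (A B : set R) : has_lbound A -> B `<=` A ->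
  (forall t, A t -> exists2 t', B t' & t' <= t) -> inf A = inf B.
Proof.
move=> lbA BA domAB.
have [[t0 At0]|/forallNP A0] := pselect (exists t, A t); last first.
  have eA : A = set0 by apply/seteqP; split=> t // /A0.
  by rewrite eA (_ : B = set0) //; apply/seteqP; split=> t // /BA; rewrite eA.
have lbB : has_lbound B by case: lbA => l lbl; exists l => t /BA /lbl.
have [t1 Bt1 _] := domAB t0 At0.
apply/eqP; rewrite eq_le; apply/andP; split.
  by apply: lb_le_inf; [exists t1 | move=> t /BA At; apply: ge_inf].
apply: lb_le_inf; first by exists t0.
by move=> t /domAB[t' Bt' le_t't]; apply: le_trans le_t't; apply: ge_inf.
Qed.

Implicit Types (F : R -> R -> R -> R -> R) (delta : R).

Definition feasible_values F delta : set R :=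
  [set t | exists x1 x2 y1 y2 : R,
    [/\ 0 <= x1, 0 <= x2, 0 <= y1 <= 1, 0 <= y2 <= 1 &
        F x1 x2 y1 y2 = 1 + delta] /\ t = x1 * y1 + x2 * y2].

Definition feasible_values_y1 F delta : set R :=
  [set t | exists x1 x2 y2 : R,
    [/\ 0 <= x1, 0 <= x2, 0 <= y2 <= 1,
        F x1 x2 1 y2 = 1 + delta & t = x1 * 1 + x2 * y2]].

Definition feasible_values_y2 F delta : set R :=
  [set t | exists x1 x2 y1 : R,
    [/\ 0 <= x1, 0 <= x2, 0 <= y1 <= 1,
        F x1 x2 y1 1 = 1 + delta & t = x1 * y1 + x2 * 1]].

Definition swap_vars F : R -> R -> R -> R -> R :=
  fun x1 x2 y1 y2 => F x2 x1 y2 y1.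

Lemma feasible_values_swap F delta :
  feasible_values (swap_vars F) delta = feasible_values F delta.
Proof.
apply/seteqP; split=> _ [x1 [x2 [y1 [y2 [[x1_ge0 x2_ge0 y1_01 y2_01 eqF] ->]]]]];
  by exists x2, x1, y2, y1; split; [split | rewrite addrC].
Qed.

Lemma feasible_values_y2_swap F delta :
  feasible_values_y2 F delta = feasible_values_y1 (swap_vars F) delta.
Proof.
apply/seteqP; split=> _ [x1 [x2 [y [x1_ge0 x2_ge0 y01 eqF ->]]]];
  by exists x2, x1, y; split; rewrite // addrC.
Qed.

Lemma feasible_values_y1_sub F delta :
  feasible_values_y1 F delta `<=` feasible_values F delta.
Proof.
move=> _ [x1 [x2 [y [x1_ge0 x2_ge0 y01 eqF ->]]]].
by exists x1, x2, 1, y; split; split; rewrite // lexx ler01.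
Qed.

Lemma feasible_values_ge0 F delta t : feasible_values F delta t -> 0 <= t.
Proof.
move=> [x1 [x2 [y1 [y2 [[x1_ge0 x2_ge0 /andP[y1_ge0 _] /andP[y2_ge0 _] _] ->]]]]].
by rewrite addr_ge0 ?mulr_ge0.
Qed.

End Infimum.

Section GeneratingSum.
Variables (R : realType) (I : finType) (P : pred I) (p m q : I -> nat) (a b : I -> R).

Definition gsum (x1 x2 y1 y2 : R) : R :=
  \sum_(i | P i) monomial (p i) (m i) (q i) (a i) (b i) x1 x2 y1 y2.

(* [l |-> gsum (l X1) (l X2) 1 Y] is a polynomial in [l]. *)
Lemma gsum_ivt (X1 X2 Y d : R) : 0 <= X1 -> 0 <= X2 ->
  gsum 0 0 1 Y <= d <= gsum X1 X2 1 Y ->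
  exists2 l : R, 0 <= l <= 1 & gsum (l * X1) (l * X2) 1 Y = d.
Proof.
move=> X1_ge0 X2_ge0 /andP[le_0d le_d1].
pose pol : {poly R} := \sum_(i | P i)
  monomial (p i) (m i) (q i) (a i) (b i) X1 X2 1 Y *: 'X^(p i + m i + q i).
have pol_gsum l : 0 <= l -> pol.[l] = gsum (l * X1) (l * X2) 1 Y.
  move=> l_ge0; rewrite horner_sum; apply: eq_bigr => i _.
  by rewrite hornerZ hornerXn monomialZx // mulrC.
have sign_change : (pol - d%:P).[0] * (pol - d%:P).[1] <= 0.
  rewrite !hornerD !hornerN !hornerC !pol_gsum ?ler01 // !mul1r !mul0r.
  by apply: mulr_le0_ge0; rewrite ?subr_le0 ?subr_ge0.
have [l l01 root_l] := polyrcf.poly_ivt ler01 sign_change.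
move: l01 root_l; rewrite in_itv /= => l01.
have /andP[l_ge0 _] := l01.
by rewrite /root hornerD hornerN hornerC pol_gsum // subr_eq0 => /eqP; exists l.
Qed.

Hypothesis admissible_exponents :
  forall i, P i -> admissible (p i) (m i) (q i) (a i) (b i).
Hypothesis gsum_x0 : forall y : R, gsum 0 0 1 y <= 1.

Lemma gsum_y0 (x1 x2 : R) : 0 <= x1 -> 0 <= x2 -> gsum x1 x2 0 0 <= 1.
Proof.
move=> x1_ge0 x2_ge0; apply: le_trans (gsum_x0 0); apply: ler_sum => i Pi.
by have [_ _ le_n2a _] := admissible_exponents Pi; apply: monomial_y0.
Qed.

Lemma gsum_shiftZ (c x1 x2 y1 y2 : R) : 0 <= x1 -> 0 <= x2 -> 0 < c <= 1 ->
  0 <= y1 -> 0 <= y2 ->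
  gsum x1 x2 (c * y1) (c * y2) <= gsum (c * x1) (c * x2) y1 y2.
Proof.
move=> x1_ge0 x2_ge0 c01 y1_ge0 y2_ge0; apply: ler_sum => i Pi.
by have [_ le_nab _ _] := admissible_exponents Pi; apply: monomial_shiftZ.
Qed.

Lemma gsum_balance (u1 u2 s : R) : 0 <= u1 -> 0 <= u2 -> 0 <= s <= 1 ->
  exists X1 X2 : R, [/\ 0 <= X1, 0 <= X2, X1 + X2 = u1 * s + u2 &
                        gsum u1 u2 s 1 <= gsum X1 X2 1 1].
Proof.
move=> u1_ge0 u2_ge0 s01; have /andP[s_ge0 _] := s01.
have u1s_ge0 : 0 <= u1 * s by rewrite mulr_ge0.
have [le_u2|lt_u2] := leP u2 (u1 * s).
  exists (u1 * s), u2; split=> //; apply: ler_sum => i Pi.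
  by have [le_pa _ _ _] := admissible_exponents Pi; apply: monomial_y1.
set M := (u1 * s + u2) / 2.
have M_ge0 : 0 <= M by rewrite divr_ge0 ?addr_ge0.
exists M, M; split=> //; first by rewrite /M; lra.
apply: ler_sum => i Pi; have [le_pa _ le_n2a le_mpq] := admissible_exponents Pi.
by apply: monomial_balance => //; apply: ltW.
Qed.

Variables (delta : R).
Hypothesis delta_gt0 : 0 < delta.

Lemma gsum_improve_y1 (x1 x2 y1 y2 : R) : 0 <= x1 -> 0 <= x2 ->
  0 <= y1 <= 1 -> 0 <= y2 <= 1 -> gsum x1 x2 y1 y2 = 1 + delta ->
  exists X1 X2 Y : R, [/\ 0 <= X1, 0 <= X2, 0 <= Y <= 1,
    1 + delta <= gsum X1 X2 1 Y & X1 + X2 * Y <= x1 * y1 + x2 * y2].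
Proof.
move=> x1_ge0 x2_ge0 /andP[y1_ge0 y1_le1] /andP[y2_ge0 y2_le1] eq_gsum.
have [le_y21|lt_y12] := leP y2 y1.
  have y1_gt0 : 0 < y1.
    rewrite lt_neqAle y1_ge0 andbT; apply/eqP => y10.
    have y20 : y2 = 0 by apply/le_anti; rewrite y2_ge0 andbT y10.
    move: eq_gsum (gsum_y0 x1_ge0 x2_ge0); rewrite -y10 y20 => ->.
    by rewrite gerDl leNgt delta_gt0.
  have eq_y2 : y1 * (y2 / y1) = y2 by rewrite mulrC divfK ?gt_eqF.
  exists (y1 * x1), (y1 * x2), (y2 / y1); split.
  - by rewrite mulr_ge0.
  - by rewrite mulr_ge0.
  - by rewrite divr_ge0 // ler_pdivrMr // mul1r.
  - rewrite -eq_gsum -[X in gsum _ _ X _](mulr1 y1) -[X in gsum _ _ _ X]eq_y2.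
    apply: gsum_shiftZ => //.
      by rewrite y1_gt0.
    by rewrite divr_ge0.
  - by rewrite mulrAC eq_y2 [y1 * _]mulrC [y2 * _]mulrC.
have y2_gt0 : 0 < y2 by apply: le_lt_trans lt_y12.
set s := y1 / y2.
have eq_y1 : y2 * s = y1 by rewrite /s mulrC divfK ?gt_eqF.
have s01 : 0 <= s <= 1 by rewrite divr_ge0 // ler_pdivrMr // mul1r ltW.
have [X1 [X2 [X1_ge0 X2_ge0 eq_sum le_gsum]]] :=
  gsum_balance (mulr_ge0 (ltW y2_gt0) x1_ge0) (mulr_ge0 (ltW y2_gt0) x2_ge0) s01.
exists X1, X2, 1; split=> //.
- by rewrite lexx ler01.
- apply: le_trans le_gsum.
  rewrite -eq_gsum -[X in gsum _ _ X _]eq_y1 -[X in gsum _ _ _ X](mulr1 y2).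
  by apply: gsum_shiftZ; rewrite ?y2_gt0 //; case/andP: s01.
- by rewrite mulr1 eq_sum -eq_y1; lra.
Qed.

Theorem inf_feasible_values_gsum_y1 :
  inf (feasible_values gsum delta) = inf (feasible_values_y1 gsum delta).
Proof.
apply: inf_eq_dominated.
- by exists 0 => t /feasible_values_ge0.
- exact: feasible_values_y1_sub.
move=> _ [x1 [x2 [y1 [y2 [[x1_ge0 x2_ge0 y1_01 y2_01 eq_gsum] ->]]]]].
have [X1 [X2 [Y [X1_ge0 X2_ge0 Y01 le_gsum le_obj]]]] :=
  gsum_improve_y1 x1_ge0 x2_ge0 y1_01 y2_01 eq_gsum.
have le_1d : gsum 0 0 1 Y <= 1 + delta <= gsum X1 X2 1 Y.
  by rewrite le_gsum andbT (le_trans (gsum_x0 Y)) // lerDl ltW.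
have [l /andP[l_ge0 l_le1] eq_l] := gsum_ivt X1_ge0 X2_ge0 le_1d.
exists (l * X1 * 1 + l * X2 * Y).
  by exists (l * X1), (l * X2), Y; split; rewrite ?mulr_ge0.
apply: le_trans le_obj; rewrite mulr1 -mulrA -mulrDr ler_piMl //.
by rewrite addr_ge0 ?mulr_ge0 //; case/andP: Y01.
Qed.

End GeneratingSum.

Section FractionalMatching.
Variables (R : realType) (V : finType) (E : rel V) (S : {set V}).
Hypothesis S_indep : indepHstar E S.
Implicit Types (u v : V) (w : V -> V -> R).

Lemma indep_nedge u v : u \in S -> v \in S -> ~~ E u v.
Proof. by case/andP: S_indep => _ /forall_inP/(_ u) H uS /(forall_inP (H uS)). Qed.

Lemma nbh_notin u : u \in S -> u \notin nbh E S.
Proof. by move=> uS; rewrite inE uS. Qed.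

Lemma nbh_out u v : u \in S -> E u v -> v \in nbh E S.
Proof.
move=> uS Euv; rewrite inE; apply/andP; split.
  by apply: contraTN Euv => /(indep_nedge uS).
by apply/existsP; exists u; rewrite uS Euv.
Qed.

Lemma nbh_in u v : v \in S -> E u v -> u \in nbh E S.
Proof.
move=> vS Euv; rewrite inE; apply/andP; split.
  by apply: contraTN Euv => /indep_nedge; apply.
by apply/existsP; exists v; rewrite vS Euv orbT.
Qed.

Lemma FE_out u v : u \in S -> FE E S u v = E u v.
Proof.
move=> uS; rewrite /FE uS (negbTE (nbh_notin uS)) /= orbF.
by case Euv: (E u v); rewrite //= (nbh_out uS Euv).
Qed.

Lemma FE_in u v : v \in S -> FE E S u v = E u v.
Proof.
move=> vS; rewrite /FE vS (negbTE (nbh_notin vS)) andbF andbT /=.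
by case Euv: (E u v); rewrite //= (nbh_in vS Euv).
Qed.

Definition out_weight w v : R := \sum_(u | E v u) w v u.
Definition in_weight w v : R := \sum_(u | E u v) w u v.

Lemma wsum_indep w v : v \in S -> wsum E S w v = out_weight w v + in_weight w v.
Proof.
by move=> vS; congr (_ + _); apply: eq_bigl => u; [apply: FE_out | apply: FE_in].
Qed.

Lemma wST_indep w : wST E S w = \sum_(u in S) out_weight w u.
Proof.
apply: eq_bigr => u uS; apply: eq_bigl => v.
by case Euv: (E u v); rewrite ?andbT ?andbF // (nbh_out uS Euv).
Qed.

Lemma wTS_indep w : wTS E S w = \sum_(v in S) in_weight w v.
Proof.
rewrite /wTS (exchange_big_dep (mem S)) /=; last by move=> u v _ /andP[].
apply: eq_bigr => v vS; apply: eq_bigl => u.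
by case Euv: (E u v); rewrite ?andbT ?andbF // (nbh_in vS Euv).
Qed.

Lemma card_set_sum (c : pred V) :
  #|[set v in S | c v]|%:R = \sum_(v in S) (c v)%:R :> R.
Proof.
rewrite -sum1_card [in LHS]big_mkcond [in RHS]big_mkcond /=.
by rewrite natr_sum; apply: eq_bigr => v _; rewrite inE; case: (v \in S); case: (c v).
Qed.

Variable w : V -> V -> R.
Hypothesis w_match : maxfracmatch E S w.

Lemma out_weight_ge0 v : v \in S -> 0 <= out_weight w v.
Proof.
case: w_match => w01 _ _ vS; apply: sumr_ge0 => u Evu.
by case/andP: (w01 v u (etrans (FE_out u vS) Evu)).
Qed.

Lemma in_weight_ge0 v : v \in S -> 0 <= in_weight w v.
Proof.
case: w_match => w01 _ _ vS; apply: sumr_ge0 => u Euv.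
by case/andP: (w01 u v (etrans (FE_in u vS) Euv)).
Qed.

Lemma weight_indep v : v \in S -> out_weight w v + in_weight w v = 1.
Proof. by case: w_match => _ _ w1 vS; rewrite -wsum_indep // w1. Qed.

Lemma out_weight_nedge v : [forall u, ~~ E v u] -> out_weight w v = 0.
Proof. by move/forallP=> nE; rewrite /out_weight big_pred0 // => u; apply: negbTE. Qed.

Lemma in_weight_nedge v : [forall u, ~~ E u v] -> in_weight w v = 0.
Proof. by move/forallP=> nE; rewrite /in_weight big_pred0 // => u; apply: negbTE. Qed.

Lemma wST_add_wTS : wST E S w + wTS E S w = #|S|%:R.
Proof.
rewrite wST_indep wTS_indep -big_split /= -sum1_card natr_sum.
by apply: eq_bigr => v vS; rewrite weight_indep.
Qed.

Lemma vplus_le_wST : (vplus E S)%:R <= wST E S w.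
Proof.
rewrite card_set_sum wST_indep; apply: ler_sum => v vS.
have [/in_weight_nedge in0|_] /= := boolP [forall u, ~~ E u v].
  by rewrite -(weight_indep vS) in0 addr0.
exact: out_weight_ge0.
Qed.

Lemma vminus_le_wTS : (vminus E S)%:R <= wTS E S w.
Proof.
rewrite card_set_sum wTS_indep; apply: ler_sum => v vS.
have [/out_weight_nedge out0|_] /= := boolP [forall u, ~~ E v u].
  by rewrite -(weight_indep vS) out0 add0r.
exact: in_weight_ge0.
Qed.

(* No vertex of [S] is isolated, since its weight is [1]. *)
Lemma card_vplus_vminus_vpm : (vplus E S + vminus E S + vpm E S)%N = #|S|.
Proof.
apply/eqP; rewrite -(eqr_nat R) !natrD !card_set_sum -!big_split /= -sum1_card natr_sum.
apply/eqP/eq_bigr => v vS; rewrite -!negb_exists; have := weight_indep vS.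
case: (boolP [exists u, E u v]) => [_|nin]; case: (boolP [exists u, E v u]) => [_|nout];
  rewrite /= ?mulr0n ?mulr1n ?add0r ?addr0 //.
move: nin nout; rewrite !negb_exists => /in_weight_nedge -> /out_weight_nedge ->.
by rewrite addr0 => /esym/eqP; rewrite oner_eq0.
Qed.

End FractionalMatching.

Lemma sup_image_bounds (R : realType) (T : Type) (W : set T) (f : T -> R)
    (w0 : T) (lo hi : R) :
  W w0 -> lo <= f w0 -> (forall w, W w -> f w <= hi) -> lo <= sup (f @` W) <= hi.
Proof.
move=> Ww0 le_lo le_hi; have Wf0 : (f @` W) (f w0) by exists w0.
have ubW : ubound (f @` W) hi by move=> _ [w Ww <-]; apply: le_hi.
apply/andP; split; last by apply: ge_sup => //; exists (f w0).
by apply: le_trans le_lo _; apply: ub_le_sup Wf0; exists hi.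
Qed.

Section MatchingBounds.
Variables (R : realType) (V : finType) (E : rel V) (S : {set V}).
Hypothesis S_indep : indepHstar E S.
Variable w0 : V -> V -> R.
Hypothesis w0_match : maxfracmatch E S w0.

Lemma a_S_bounds : wST E S w0 <= a_S E R S <= #|S|%:R - (vminus E S)%:R.
Proof.
apply: sup_image_bounds w0_match (lexx _) _ => w w_match.
by have := wST_add_wTS S_indep w_match; have := vminus_le_wTS S_indep w_match; lra.
Qed.

Lemma b_S_bounds : wTS E S w0 <= b_S E R S <= #|S|%:R - (vplus E S)%:R.
Proof.
apply: sup_image_bounds w0_match (lexx _) _ => w w_match.
by have := wST_add_wTS S_indep w_match; have := vplus_le_wST S_indep w_match; lra.
Qed.

Lemma admissible_a_S : #|S|%:R <= 2 * a_S E R S ->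
  admissible (vplus E S) (vminus E S) (vpm E S) (a_S E R S) (b_S E R S).
Proof.
move=> le_S2a; have /andP[le_wa le_a] := a_S_bounds; have /andP[le_wb _] := b_S_bounds.
have le_pw := vplus_le_wST S_indep w0_match; have eq_S := wST_add_wTS S_indep w0_match.
by apply: admissible_of_bounds; rewrite ?(card_vplus_vminus_vpm S_indep w0_match); lra.
Qed.

Lemma admissible_b_S : #|S|%:R <= 2 * b_S E R S ->
  admissible (vminus E S) (vplus E S) (vpm E S) (b_S E R S) (a_S E R S).
Proof.
move=> le_S2b; have /andP[le_wa _] := a_S_bounds; have /andP[le_wb le_b] := b_S_bounds.
have le_mw := vminus_le_wTS S_indep w0_match; have eq_S := wST_add_wTS S_indep w0_match.
apply: admissible_of_bounds; try rewrite [(vminus _ _ + _)%N]addnC.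
all: by rewrite ?(card_vplus_vminus_vpm S_indep w0_match); lra.
Qed.

End MatchingBounds.

Section GeneratingFunction.
Variables (R : realType) (V : finType) (E : rel V).

Lemma indepHstar0 : indepHstar E finset.set0.
Proof.
apply/andP; split; first by apply/fintype.subsetP => v; rewrite finset.in_set0.
by apply/forall_inP => u; rewrite finset.in_set0.
Qed.

Lemma maxfracmatch0 : maxfracmatch E finset.set0 (fun _ _ => 0 : R).
Proof.
split=> [u v _|v|v]; rewrite ?inE ?lexx ?ler01 //.
by rewrite /wsum !big1 // addr0 ler01.
Qed.

Lemma maxfracmatch_exists (S : {set V}) :
  #|S|%:R <= 2 * a_S E R S \/ #|S|%:R <= 2 * b_S E R S ->
  exists w : V -> V -> R, maxfracmatch E S w.
Proof.
move=> le_S; apply/not_existsP => nomatch.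
have noW : [set w : V -> V -> R | maxfracmatch E S w] = set0.
  by apply/seteqP; split=> w // /nomatch.
have S0 : S = finset.set0.
  apply/eqP; rewrite -cards_eq0 -(eqr_nat R) eq_le ler0n andbT.
  by case: le_S; rewrite /a_S /b_S noW image_set0 sup0 mulr0.
by move: nomatch; rewrite S0 => /(_ _ maxfracmatch0).
Qed.

Lemma gH_x0 :
  (forall S, indepHstar E S -> exists w : V -> V -> R, maxfracmatch E S w) ->
  forall y1 y2 : R, gH E 0 0 y1 y2 = 1.
Proof.
move=> match_ex y1 y2; rewrite /gH (bigD1 finset.set0) ?indepHstar0 //= big1 ?addr0.
  have := card_vplus_vminus_vpm indepHstar0 maxfracmatch0.
  rewrite cards0 => /eqP; rewrite !addn_eq0 => /andP[/andP[/eqP p0 /eqP m0] /eqP q0].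
  have zero_sum (A : {set V}) (P : V -> pred V) :
      \sum_(u in A) \sum_(v | P u v) (0 : R) = 0.
    by rewrite big1 // => u _; rewrite big1_eq.
  have := a_S_bounds indepHstar0 maxfracmatch0.
  have := b_S_bounds indepHstar0 maxfracmatch0.
  rewrite /wST /wTS !zero_sum cards0 p0 m0 !subr0 => b0 a0.
  by rewrite q0 -(le_anti a0) -(le_anti b0) !expr0 !powRr0 !mul1r.
move=> S /andP[S_indep S_neq0]; have [w w_match] := match_ex S S_indep.
rewrite minxx -!exprD (card_vplus_vminus_vpm S_indep w_match) expr0n.
by rewrite cards_eq0 (negbTE S_neq0) !mul0r.
Qed.

Lemma gH_swap : swap_vars (@gH V E R) =
  gsum (indepHstar E) (vminus E) (vplus E) (vpm E) (b_S E R) (a_S E R).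
Proof.
by apply/funext => x1; apply/funext => x2; apply/funext => y1; apply/funext => y2;
  apply: eq_bigr => S _; rewrite [RHS]monomial_swap.
Qed.

Lemma GH_feasible (delta : R) : GH E delta = inf (feasible_values (@gH V E R) delta).
Proof. by []. Qed.

Lemma GH_y1_feasible (delta : R) :
  GH_y1 E delta = inf (feasible_values_y1 (@gH V E R) delta).
Proof. by []. Qed.

Lemma GH_y2_feasible (delta : R) :
  GH_y2 E delta = inf (feasible_values_y2 (@gH V E R) delta).
Proof. by []. Qed.

End GeneratingFunction.

Theorem proposition5p7 (R : realType) (V : finType) (E : rel V)
  (hE : irreflexive E) (delta : R) (hdelta : 0 < delta) :
  ((forall S : {set V}, indepHstar E S -> (#|S|)%:R <= 2 * @a_S V E R S) ->
     GH E delta = GH_y1 E delta) /\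
  ((forall S : {set V}, indepHstar E S -> (#|S|)%:R <= 2 * @b_S V E R S) ->
     GH E delta = GH_y2 E delta).
Proof.
split=> le_S2; rewrite GH_feasible.
  have match_ex S (S_indep : indepHstar E S) :=
    maxfracmatch_exists (or_introl (le_S2 S S_indep)).
  rewrite GH_y1_feasible; apply: inf_feasible_values_gsum_y1 => // [S S_indep|y].
    have [w w_match] := match_ex S S_indep.
    exact (admissible_a_S S_indep w_match (le_S2 S S_indep)).
  by rewrite -[X in X <= _]/(gH E 0 0 1 y) gH_x0.
have match_ex S (S_indep : indepHstar E S) :=
  maxfracmatch_exists (or_intror (le_S2 S S_indep)).
rewrite GH_y2_feasible feasible_values_y2_swap -feasible_values_swap gH_swap.
apply: inf_feasible_values_gsum_y1 => // [S S_indep|y].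
  have [w w_match] := match_ex S S_indep.
  exact (admissible_b_S S_indep w_match (le_S2 S S_indep)).
by rewrite -gH_swap /swap_vars gH_x0.
Qed.
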